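(* Let $G=(U,\alpha)$ and $H=(V,\beta)$ be connected graphs with degree functions $p$ and $q$. If $\gamma$ is a weight function on $U\times V$ with degree function $r(u,v)=\sum_{(u',v')\in U\times V}\gamma((u,v),(u',v'))$ satisfying, for all $u,u'\in U$ and $v,v'\in V$, $p(u)\sum_{\tilde v\in V}\gamma((u,v),(u',\tilde v))=\alpha(u,u')\,r(u,v)$ and $q(v)\sum_{\tilde u\in U}\gamma((u,v),(\tilde u,v'))=\beta(v,v')\,r(u,v)$, then $\sum_{v\in V}r(u,v)=p(u)$ for all $u\in U$ and $\sum_{u\in U}r(u,v)=q(v)$ for all $v\in V$.
   Context: A weight function on a finite set $U$ is $\alpha:U\times U\to\mathbb{R}$ with $\alpha\ge0$, $\alpha(u,u')=\alpha(u',u)$, and $\sum_{u,u'}\alpha(u,u')=1$; its degree function is $p(u)=\sum_{u'}\alpha(u,u')$. A graph is $(U,\alpha)$; it is connected if any two distinct vertices are joined by a path of edges $(u,u')$ with $\alpha(u,u')>0$. *)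

From mathcomp Require Import all_boot all_order all_algebra.
Set Implicit Arguments. Unset Strict Implicit. Unset Printing Implicit Defensive.
Import Order.TTheory GRing.Theory Num.Theory.
Local Open Scope ring_scope.

Definition is_weight (R : realFieldType) (U : finType) (a : U -> U -> R) : Prop :=
  (forall u u', 0 <= a u u') /\ (forall u u', a u u' = a u' u) /\
  (\sum_(u : U) \sum_(u' : U) a u u' = 1).

Definition degf (R : realFieldType) (U : finType) (a : U -> U -> R) (u : U) : R :=
  \sum_(u' : U) a u u'.

Definition edge_rel (R : realFieldType) (U : finType) (a : U -> U -> R) : rel U :=
  fun u u' => 0 < a u u'.

Definition connected_graph (R : realFieldType) (U : finType) (a : U -> U -> R) : Prop :=
  forall u u' : U, u != u' ->
    exists2 s : seq U, path (edge_rel a) u s & last u s = u'.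

From mathcomp Require Import all_boot all_order all_algebra.
Import Order.TTheory GRing.Theory Num.Theory.
Local Open Scope ring_scope.

(* The two balance conditions say that the marginal kernel
   [M u u' = \sum_(v, v') gamma (u, v) (u', v')] of gamma on U is symmetric and
   satisfies [p(u) M(u, u') = alpha(u, u') P(u)], where P is the U-marginal of
   the degree function r.  Hence along every edge of positive weight the ratio
   P/p is preserved, so by connectedness P = c p; both P and p have total
   mass 1, whence c = 1.  The same argument applies to V. *)

Section ConnectedWeight.

Context {R : realFieldType} {U : finType} {a : U -> U -> R}.
Hypotheses (a_weight : is_weight a) (a_connected : connected_graph a).

Lemma sum_degf : \sum_(u : U) degf a u = 1.
Proof. by case: a_weight => _ []. Qed.

Lemma degf_gt0 (u : U) : 0 < degf a u.
Proof.
have [a_ge0 _] := a_weight.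
have [u' u'_neq_u | only_u] := pickP (fun u' => u' != u).
  rewrite eq_sym in u'_neq_u.
  have [[|x s] /= u_s u_s_last] := a_connected _ _ u'_neq_u.
    by rewrite u_s_last eqxx in u'_neq_u.
  move: u_s => /andP[a_ux _]; rewrite /degf (bigD1 x) //= ltr_pwDl //.
  by rewrite sumr_ge0.
have U_eq_u (F : U -> R) : \sum_(i : U) F i = F u.
  rewrite (bigD1 u) //= big1 ?addr0 // => i i_neq_u.
  by move: (only_u i) => /= /negbFE; rewrite (negbTE i_neq_u).
by move: sum_degf; rewrite U_eq_u => ->; exact: ltr01.
Qed.

Lemma connected_edge_invariant (T : Type) (f : U -> T) :
  (forall x y, edge_rel a x y -> f x = f y) -> forall x y, f x = f y.
Proof.
move=> f_edge x y; have [<- // | x_neq_y] := eqVneq x y.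
have [s x_s <-] := a_connected _ _ x_neq_y.
elim: s x x_s {x_neq_y} => [|z s IHs] x //= /andP[a_xz z_s].
by rewrite (f_edge _ _ a_xz) (IHs _ z_s).
Qed.

Lemma balanced_eq_degf (M : U -> U -> R) (P : U -> R) :
  (forall u u', M u u' = M u' u) ->
  (forall u u', degf a u * M u u' = a u u' * P u) ->
  \sum_(u : U) P u = 1 -> forall u, P u = degf a u.
Proof.
move=> M_sym M_bal P_mass.
have [_ [a_sym _]] := a_weight.
have degf_neq0 u : degf a u != 0 by rewrite lt0r_neq0 ?degf_gt0.
pose ratio u := P u / degf a u.
have P_ratio u : P u = ratio u * degf a u by rewrite /ratio divfK.
have M_ratio u u' : M u u' = a u u' * ratio u.
  by apply: (mulfI (degf_neq0 u)); rewrite M_bal mulrCA [degf a u * _]mulrC -P_ratio.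
have ratio_const : forall x y, ratio x = ratio y.
  apply: connected_edge_invariant => x y a_xy.
  apply: (mulfI (lt0r_neq0 a_xy)).
  by rewrite -M_ratio M_sym M_ratio a_sym.
have ratio1 u : ratio u = 1.
  move: P_mass; under eq_bigr => x _ do rewrite P_ratio (ratio_const x u).
  by rewrite -mulr_sumr sum_degf mulr1.
by move=> u; rewrite P_ratio ratio1 mul1r.
Qed.

End ConnectedWeight.

Lemma sum_degf_pair (R : realFieldType) (U V : finType)
    (gamma : (U * V)%type -> (U * V)%type -> R) :
  is_weight gamma -> \sum_(u : U) \sum_(v : V) degf gamma (u, v) = 1.
Proof. by move=> gamma_w; rewrite pair_big -(sum_degf gamma_w); apply: eq_bigr => -[]. Qed.

Theorem proposition2p5 (R : realFieldType) (U V : finType)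
  (alpha : U -> U -> R) (beta : V -> V -> R)
  (gamma : (U * V)%type -> (U * V)%type -> R) :
  is_weight alpha -> connected_graph alpha ->
  is_weight beta -> connected_graph beta ->
  is_weight gamma ->
  (forall (u u' : U) (v : V),
     degf alpha u * (\sum_(vt : V) gamma (u, v) (u', vt))
     = alpha u u' * degf gamma (u, v)) ->
  (forall (u : U) (v v' : V),
     degf beta v * (\sum_(ut : U) gamma (u, v) (ut, v'))
     = beta v v' * degf gamma (u, v)) ->
  (forall u : U, \sum_(v : V) degf gamma (u, v) = degf alpha u) /\
  (forall v : V, \sum_(u : U) degf gamma (u, v) = degf beta v).
Proof.
move=> alpha_w alpha_conn beta_w beta_conn gamma_w alpha_bal beta_bal.
have [_ [gamma_sym _]] := gamma_w.
split.
- apply: (balanced_eq_degf alpha_w alpha_conn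
    (fun u u' => \sum_(v : V) \sum_(v' : V) gamma (u, v) (u', v'))).
  + by move=> u u'; rewrite exchange_big; do 2!apply: eq_bigr => ? _.
  + by move=> u u'; rewrite mulr_sumr mulr_sumr; apply: eq_bigr.
  + exact: sum_degf_pair.
- apply: (balanced_eq_degf beta_w beta_conn
    (fun v v' => \sum_(u : U) \sum_(u' : U) gamma (u, v) (u', v'))).
  + by move=> v v'; rewrite exchange_big; do 2!apply: eq_bigr => ? _.
  + by move=> v v'; rewrite mulr_sumr mulr_sumr; apply: eq_bigr.
  + by rewrite exchange_big sum_degf_pair.
Qed.
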